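(* Let $\mathcal A_+,\mathcal A_-\subseteq\mathbb R^n$ be disjoint finite sets such that $(\mathcal A_+,\mathcal A_-)$ is nonseparable of dimension $d$, let $D\in\mathcal F_d(\mathcal A_+)$ with $\mathcal A_-\subseteq D$, write $\Lambda(\mathcal A_+,D)=\{\Delta_1,\dots,\Delta_r\}$ and fix $j\in[r]$. Then for each $a\in\mathcal A_+\setminus\operatorname{vertices}(\Delta_j)$ there is a unique facet $\Gamma_a$ of $\Delta_j$ such that $\operatorname{conv}(\Gamma_a\cup\{a\})\in\Lambda(\mathcal A_+,D)$. Consequently the map $\varphi_j:\mathcal A_+\setminus\operatorname{vertices}(\Delta_j)\to[r]\setminus\{j\}$, $a\mapsto\varphi_j(a)$ where $\Delta_{\varphi_j(a)}=\operatorname{conv}(\Gamma_a\cup\{a\})$, is well defined and injective.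
   Context: For disjoint finite sets $\mathcal A_+,\mathcal A_-\subseteq\mathbb R^n$, the dimension of $(\mathcal A_+,\mathcal A_-)$ is $\dim\operatorname{conv}(\mathcal A_+\cup\mathcal A_-)$; let $d$ be this dimension. $\mathcal F(\mathcal A_+)$ is the common refinement of all regular polyhedral subdivisions of the point configuration $\mathcal A_+$, and $\mathcal F_d(\mathcal A_+)$ its $d$-dimensional cells. $(\mathcal A_+,\mathcal A_-)$ is nonseparable if $\mathcal A_-\subseteq\operatorname{relint}(\operatorname{conv}(\mathcal A_+))$ and there is $D\in\mathcal F_d(\mathcal A_+)$ with $\mathcal A_-\subseteq D$. $\Lambda(\mathcal A_+,D)$ is the set of $d$-dimensional simplices $\Delta$ with vertices in $\mathcal A_+$ such that $\operatorname{relint}(D)\subseteq\operatorname{relint}(\Delta)$. $[r]=\{1,\dots,r\}$. *)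

From mathcomp Require Import all_boot all_order all_algebra.
From mathcomp Require Import boolp classical_sets reals.
Set Implicit Arguments. Unset Strict Implicit. Unset Printing Implicit Defensive.
Import Order.TTheory GRing.Theory Num.Theory.
Local Open Scope ring_scope.
Local Open Scope classical_set_scope.

Section Defs.
Variables (R : realType) (n : nat).
Notation pt := ('rV[R]_n).

Definition pts (s : seq pt) : set pt := [set x | x \in s].

Definition conv (S : set pt) : set pt :=
  [set x | exists k (p : 'I_k -> pt) (w : 'I_k -> R),
     (forall i, S (p i)) /\ (forall i, 0 <= w i) /\
     \sum_(i < k) w i = 1 /\ x = \sum_(i < k) w i *: p i].

Definition aff (S : set pt) : set pt :=
  [set x | exists k (p : 'I_k -> pt) (w : 'I_k -> R),
     (forall i, S (p i)) /\ \sum_(i < k) w i = 1 /\ x = \sum_(i < k) w i *: p i].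

Definition affindep k (p : 'I_k.+1 -> pt) : bool :=
  \rank (\matrix_(i < k, j < n) (p (lift ord0 i) - p ord0) ord0 j) == k.

Definition affdim_ge (S : set pt) (k : nat) : Prop :=
  exists p : 'I_k.+1 -> pt, (forall i, S (p i)) /\ affindep p.

Definition affdim (S : set pt) (k : nat) : Prop :=
  affdim_ge S k /\ ~ affdim_ge S k.+1.

Definition relint (S : set pt) : set pt :=
  [set x | S x /\ exists e : R, 0 < e /\
     forall y, aff S y -> (forall i, `|y ord0 i - x ord0 i| < e) -> S y].

Definition dotv (c y : pt) : R := \sum_(i < n) c ord0 i * y ord0 i.

Definition face (P F : set pt) : Prop :=
  exists (c : pt) (b : R), (forall y, P y -> dotv c y <= b) /\
    F = P `&` [set y | dotv c y = b].

Definition vertex (P : set pt) (v : pt) : Prop := face P [set v].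

Definition facet (P G : set pt) : Prop :=
  face P G /\ exists k, affdim P k.+1 /\ affdim G k.

(* cells of the regular subdivision of the point configuration Ap induced by
   the height function w: projections of lower faces of the lifted points *)
Definition regular_cell (Ap : seq pt) (w : pt -> R) (K : set pt) : Prop :=
  exists (c : pt) (b : R),
    (forall a, a \in Ap -> dotv c a + b <= w a) /\
    (exists a, a \in Ap /\ dotv c a + b = w a) /\
    K = conv [set a | a \in Ap /\ dotv c a + b = w a].

(* cells of F(Ap): nonempty intersections of one cell from every regular
   subdivision (common refinement of all regular subdivisions) *)
Definition refinement_cell (Ap : seq pt) (K : set pt) : Prop :=
  K !=set0 /\ exists sigma : (pt -> R) -> set pt,
    (forall w, regular_cell Ap w (sigma w)) /\
    K = [set x | forall w, sigma w x].

Definition cellFd (Ap : seq pt) (d : nat) (D : set pt) : Prop :=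
  refinement_cell Ap D /\ affdim D d.

Definition Lambda (Ap : seq pt) (d : nat) (D : set pt) (Delta : set pt) : Prop :=
  exists V : 'I_d.+1 -> pt, (forall i, V i \in Ap) /\ affindep V /\
    Delta = conv (range V) /\ relint D `<=` relint Delta.

Definition nonseparable (Ap Am : seq pt) : Prop :=
  exists d, affdim (conv (pts (Ap ++ Am))) d /\
    pts Am `<=` relint (conv (pts Ap)) /\
    exists D, cellFd Ap d D /\ pts Am `<=` D.

End Defs.

From mathcomp Require Import all_boot all_order all_algebra.
From mathcomp Require Import boolp classical_sets reals.
From mathcomp Require Import ring lra.
Set Implicit Arguments. Unset Strict Implicit. Unset Printing Implicit Defensive.
Import Order.TTheory GRing.Theory Num.Theory.
Local Open Scope ring_scope.
Local Open Scope classical_set_scope.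

(* Fix x0 in the relative interior of D, with barycentric coordinates mu in
   Delta_j = conv (v_0, ..., v_d).  A (d-1)-simplex with vertices in A+ cannot
   meet the half-open segment [x0, x) for x in D: the regular subdivision with
   height 0 on its vertices and 1 on the other points of A+ has a cell
   containing D, which would force D into that simplex.  In particular all
   mu_l are positive.  Writing a = sum_l lam_l v_l, replacing v_k by a yields
   a simplex containing D when k minimises mu_l / lam_l over lam_l > 0 (the
   ratio test of the simplex method); conversely, if conv (G U {a}) is in
   Lambda for a facet G of Delta_j, then x0 lies in it, which forces G to be
   opposite to a strict minimiser of that ratio, so the minimiser and hence
   Gamma_a are unique.  Finally a is the only vertex of conv (Gamma_a U {a})
   that is not a vertex of Delta_j, which makes phi_j injective and avoid j. *)

Section ConvexGeometry.
Variables (R : realType) (n : nat).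
Notation pt := ('rV[R]_n).

Definition convex_set (C : set pt) := forall (u v : pt) (s : R),
  C u -> C v -> 0 <= s -> s <= 1 -> C ((1 - s) *: u + s *: v).

Lemma sub_conv (S : set pt) : S `<=` conv S.
Proof.
move=> x Sx; exists 1%N, (fun _ => x), (fun _ => 1); do 2!split=> //.
by rewrite !big_ord1 scale1r.
Qed.

Lemma conv_mono (S T : set pt) : S `<=` T -> conv S `<=` conv T.
Proof.
move=> ST x [k [p [w [Sp [w0 [w1 ->]]]]]].
by exists k, p, w; split=> // i; apply: ST.
Qed.

Lemma convex_conv (S : set pt) : convex_set (conv S).
Proof.
move=> u v s [k1 [p1 [w1 [Sp1 [w10 [w11 ->]]]]]] [k2 [p2 [w2 [Sp2 [w20 [w21 ->]]]]]] s0 s1.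
have splitl i : split (lshift k2 i) = inl i := unsplitK (inl i).
have splitr i : split (rshift k1 i) = inr i := unsplitK (inr i).
exists (k1 + k2)%N.
exists (fun i => match split i with inl a => p1 a | inr b => p2 b end).
exists (fun i => match split i with inl a => (1 - s) * w1 a | inr b => s * w2 b end).
split; [|split; [|split]].
- by move=> i; case: split.
- by move=> i; case: split => a; apply: mulr_ge0 => //; rewrite subr_ge0.
- rewrite big_split_ord /=.
  under eq_bigr do rewrite splitl.
  under [X in _ + X]eq_bigr do rewrite splitr.
  by rewrite -!mulr_sumr w11 w21 !mulr1 subrK.
- rewrite big_split_ord /=.
  under [X in _ = X + _]eq_bigr do rewrite splitl.
  under [X in _ = _ + X]eq_bigr do rewrite splitr.
  by rewrite !scaler_sumr; congr (_ + _); apply: eq_bigr => i _; rewrite scalerA.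
Qed.

Lemma conv_sub_convex (S C : set pt) : convex_set C -> S `<=` C -> conv S `<=` C.
Proof.
move=> cC SC x [k [p [w [Sp [w0 [w1 ->]]]]]].
elim: k p w Sp w0 w1 => [|k IH] p w Sp w0 w1.
  by move: w1; rewrite big_ord0 => /eqP; rewrite eq_sym oner_eq0.
rewrite big_ord_recl; rewrite big_ord_recl in w1.
set s := \sum_(i < k) w (lift ord0 i).
have s0 : 0 <= s by apply: sumr_ge0.
have ws : w ord0 = 1 - s by rewrite -w1 addrK.
have [s_eq0|s_neq0] := eqVneq s 0.
  have wz i : w (lift ord0 i) = 0.
    move/eqP: s_eq0; rewrite psumr_eq0 // => /allP H.
    by apply/eqP; apply: (H i); rewrite mem_index_enum.
  rewrite big1 ?addr0; last by move=> i _; rewrite wz scale0r.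
  by rewrite ws s_eq0 subr0 scale1r; apply: SC.
have sgt0 : 0 < s by rewrite lt_def s_neq0.
have -> : \sum_(i < k) w (lift ord0 i) *: p (lift ord0 i) =
   s *: \sum_(i < k) (w (lift ord0 i) / s) *: p (lift ord0 i).
  rewrite scaler_sumr; apply: eq_bigr => i _.
  by rewrite scalerA mulrCA mulfV // mulr1.
rewrite ws; apply: cC => //; first exact: SC.
- apply: (IH (fun i => p (lift ord0 i)) (fun i => w (lift ord0 i) / s)).
  + by move=> i; apply: Sp.
  + by move=> i; apply: divr_ge0.
  + by rewrite -mulr_suml mulfV.
- by rewrite -(subrK s 1) lerDr -ws.
Qed.

Lemma conv_sub_aff (S : set pt) : conv S `<=` aff S.
Proof. by move=> x [k [p [w [Sp [_ [w1 ->]]]]]]; exists k, p, w. Qed.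

Lemma relint_sub (S : set pt) : relint S `<=` S.
Proof. by move=> x []. Qed.

Definition bary k (U : 'I_k -> pt) (b : 'I_k -> R) : pt := \sum_(i < k) b i *: U i.

Lemma bary_comb k (U : 'I_k -> pt) a b s :
  bary U (fun l => (1 - s) * a l + s * b l) = (1 - s) *: bary U a + s *: bary U b.
Proof.
rewrite /bary !scaler_sumr -big_split; apply: eq_bigr => i _ /=.
by rewrite !scalerA -scalerDl.
Qed.

Lemma bary0 k (U : 'I_k -> pt) : bary U (fun _ => 0) = 0.
Proof. by rewrite /bary big1 // => i _; rewrite scale0r. Qed.

Lemma conv_rangeP k (U : 'I_k -> pt) x : conv (range U) x <->
  exists b : 'I_k -> R, (forall i, 0 <= b i) /\ \sum_i b i = 1 /\ x = bary U b.
Proof.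
split; last first.
  by move=> [b [b0 [b1 ->]]]; exists k, U, b; split=> // i; exists i.
move: x; apply: (@conv_sub_convex _ (fun x => exists b : 'I_k -> R,
   (forall i, 0 <= b i) /\ \sum_i b i = 1 /\ x = bary U b)).
  move=> u v s [b [b0 [b1 ->]]] [b' [b0' [b1' ->]]] s0 s1.
  exists (fun i => (1 - s) * b i + s * b' i); split; [|split].
  - by move=> i; apply: addr_ge0; apply: mulr_ge0 => //; rewrite subr_ge0.
  - by rewrite big_split /= -!mulr_sumr b1 b1' !mulr1 subrK.
  - by rewrite bary_comb.
move=> _ [i _ <-]; exists (fun l => (l == i)%:R); split; [|split].
- by move=> l; rewrite ler0n.
- by rewrite (bigD1 i) //= eqxx big1 ?addr0 // => l /negbTE ->.
- rewrite /bary (bigD1 i) //= eqxx scale1r big1 ?addr0 //.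
  by move=> l /negbTE ->; rewrite scale0r.
Qed.

Lemma sum_lift (M : nmodType) k (i : 'I_k.+1) (F : 'I_k.+1 -> M) :
  \sum_(l < k.+1) F l = F i + \sum_(j < k) F (lift i j).
Proof. by rewrite (bigD1_ord i). Qed.

Lemma conv_range_lift k (W : 'I_k.+1 -> pt) be l : (forall i, 0 <= be i) ->
  \sum_i be i = 1 -> be l = 0 -> conv (range (fun j => W (lift l j))) (bary W be).
Proof.
move=> be0 be1 bl; apply/conv_rangeP; exists (fun j => be (lift l j)); split=> //; split.
  by rewrite -be1 (sum_lift l) bl add0r.
by rewrite /bary (sum_lift l) bl scale0r add0r.
Qed.

Lemma psumr_eq0P k (F : 'I_k -> R) : (forall i, 0 <= F i) -> \sum_i F i = 0 ->
  forall i, F i = 0.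
Proof.
move=> F0 /eqP; rewrite psumr_eq0 // => /allP H i.
by apply/eqP; apply: H; rewrite mem_index_enum.
Qed.

Definition affine_comb k (U : 'I_k -> pt) (x : pt) : Prop :=
  exists b : 'I_k -> R, \sum_i b i = 1 /\ x = bary U b.

Lemma aff_sub_affine_comb k (U : 'I_k -> pt) (S : set pt) :
  S `<=` affine_comb U -> aff S `<=` affine_comb U.
Proof.
move=> SU x [m [p [w [Sp [w1 ->]]]]].
have /choice [f Hf] : forall i : 'I_m, exists b : 'I_k -> R,
    \sum_l b l = 1 /\ p i = bary U b by move=> i; apply: SU.
exists (fun l => \sum_(i < m) w i * f i l); split.
  rewrite exchange_big /= -w1; apply: eq_bigr => i _.
  by rewrite -mulr_sumr (proj1 (Hf i)) mulr1.
rewrite /bary; under eq_bigr do rewrite (proj2 (Hf _)) /bary scaler_sumr.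
rewrite exchange_big /=; apply: eq_bigr => l _.
by rewrite scaler_suml; apply: eq_bigr => i _; rewrite scalerA.
Qed.

Lemma dotvD c (u v : pt) : dotv c (u + v) = dotv c u + dotv c v.
Proof. by rewrite /dotv -big_split; apply: eq_bigr => i _; rewrite mxE mulrDr. Qed.

Lemma dotvZ c a (u : pt) : dotv c (a *: u) = a * dotv c u.
Proof. by rewrite /dotv mulr_sumr; apply: eq_bigr => i _; rewrite mxE mulrCA. Qed.

Lemma dotv_sum c k (F : 'I_k -> pt) : dotv c (\sum_i F i) = \sum_i dotv c (F i).
Proof.
rewrite /dotv exchange_big /=; apply: eq_bigr => j _.
by rewrite summxE mulr_sumr.
Qed.

Lemma dotv_mx c (y : pt) : dotv c y = (y *m c^T) 0 0.
Proof. by rewrite mxE /dotv; apply: eq_bigr => j _; rewrite mxE mulrC. Qed.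

Lemma dotv_bary c k (U : 'I_k -> pt) b :
  dotv c (bary U b) = \sum_i b i * dotv c (U i).
Proof. by rewrite /bary dotv_sum; apply: eq_bigr => i _; rewrite dotvZ. Qed.

Lemma dotv_baryD c b0 k (U : 'I_k -> pt) b : \sum_i b i = 1 ->
  dotv c (bary U b) + b0 = \sum_i b i * (dotv c (U i) + b0).
Proof.
move=> b1; rewrite dotv_bary.
under [RHS]eq_bigr do rewrite mulrDr.
by rewrite big_split /= -mulr_suml b1 mul1r.
Qed.

Lemma dotv_bary_interp c b k (V : 'I_k -> pt) (h : 'I_k -> R) (be : 'I_k -> R) :
  (forall l, dotv c (V l) = b + h l) -> \sum_l be l = 1 ->
  dotv c (bary V be) = b + \sum_l be l * h l.
Proof.
move=> Hc b1; rewrite dotv_bary.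
under eq_bigr do rewrite Hc mulrDr.
by rewrite big_split /= -mulr_suml b1 mul1r.
Qed.

Lemma conv_decomp c b0 (S : set pt) y : conv S y ->
  exists k (p : 'I_k -> pt) (w : 'I_k -> R), (forall i, S (p i)) /\
   (forall i, 0 <= w i) /\ \sum_i w i = 1 /\ y = bary p w /\
   dotv c y + b0 = \sum_i w i * (dotv c (p i) + b0).
Proof.
move=> [k [p [w [Sp [w0 [w1 ->]]]]]]; exists k, p, w; do 4!split=> //.
exact: dotv_baryD.
Qed.

Definition diffmx k (U : 'I_k.+1 -> pt) : 'M[R]_(k, n) :=
  \matrix_(i < k, j < n) (U (lift ord0 i) - U ord0) ord0 j.

Lemma mul_diffmx k (U : 'I_k.+1 -> pt) (g : 'rV[R]_k) :
  g *m diffmx U = \sum_(i < k) g 0 i *: (U (lift ord0 i) - U ord0).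
Proof. by apply/rowP => j; rewrite !mxE summxE; apply: eq_bigr => i _; rewrite !mxE. Qed.

Lemma bary_sum0 k (U : 'I_k.+1 -> pt) (a : 'I_k.+1 -> R) : \sum_i a i = 0 ->
  bary U a = \sum_(i < k) a (lift ord0 i) *: (U (lift ord0 i) - U ord0).
Proof.
rewrite big_ord_recl => /eqP; rewrite addr_eq0 => /eqP a0.
rewrite /bary big_ord_recl a0.
under [RHS]eq_bigr do rewrite scalerBr.
by rewrite sumrB scaleNr -scaler_suml addrC.
Qed.

Lemma rank_lt_kernel p q (A : 'M[R]_(p, q)) : (\rank A < p)%N ->
  exists g : 'rV[R]_p, g != 0 /\ g *m A = 0.
Proof.
move=> rA.
have Knz : kermx A != 0 by rewrite -mxrank_eq0 mxrank_ker subn_eq0 -ltnNge.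
have [i Hi] : exists i, row i (kermx A) != 0.
  apply/not_existsP => H; move/negP: Knz; apply.
  apply/eqP/row_matrixP => i; rewrite row0.
  by move: (H i); case: eqP.
by exists (row i (kermx A)); split=> //; rewrite -row_mul mulmx_ker row0.
Qed.

Lemma row_neq0P q (g : 'rV[R]_q) : g != 0 -> exists i, g 0 i != 0.
Proof.
move=> gnz; apply/not_existsP => H; move/negP: gnz; apply; apply/eqP/rowP => i.
by rewrite mxE; move: (H i); case: eqP.
Qed.

Lemma affdepP k (U : 'I_k.+1 -> pt) : ~~ affindep U ->
  exists a : 'I_k.+1 -> R, (exists i, a i != 0) /\ \sum_i a i = 0 /\ bary U a = 0.
Proof.
move=> nU.
have rk : (\rank (diffmx U) < k)%N by rewrite ltn_neqAle rank_leq_row andbT.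
have [g [gnz gM]] := rank_lt_kernel rk.
pose a l := if unlift ord0 l is Some i then g 0 i else - \sum_(i < k) g 0 i.
have aS i : a (lift ord0 i) = g 0 i by rewrite /a liftK.
have a1 : \sum_i a i = 0.
  by rewrite big_ord_recl; under eq_bigr do rewrite aS; rewrite /a unlift_none addNr.
exists a; split; [|split=> //].
  by have [i gi] := row_neq0P gnz; exists (lift ord0 i); rewrite aS.
by rewrite bary_sum0 //; under eq_bigr do rewrite aS; rewrite -mul_diffmx.
Qed.

Lemma affindepP k (U : 'I_k.+1 -> pt) : affindep U ->
  forall a : 'I_k.+1 -> R, \sum_i a i = 0 -> bary U a = 0 -> forall i, a i = 0.
Proof.
move=> iU a a0 aU.
pose g : 'rV[R]_k := \row_i a (lift ord0 i).
have gM : g *m diffmx U = 0 *m diffmx U.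
  rewrite mul0mx mul_diffmx -[X in _ = X]aU bary_sum0 //.
  by apply: eq_bigr => i _; rewrite mxE.
have aS i : a (lift ord0 i) = 0.
  by move/rowP: (row_free_inj iU gM) => /(_ i); rewrite !mxE.
move=> i; case: (unliftP ord0 i) => [j ->|->]; first exact: aS.
by move: a0; rewrite big_ord_recl big1 ?addr0.
Qed.

Lemma affindep_bary_inj k (U : 'I_k.+1 -> pt) : affindep U ->
  forall a b : 'I_k.+1 -> R, \sum_i a i = \sum_i b i -> bary U a = bary U b ->
  forall i, a i = b i.
Proof.
move=> iU a b ab Uab i; apply/eqP; rewrite -subr_eq0; apply/eqP.
apply: (affindepP iU (a := fun i => a i - b i)); first by rewrite sumrB ab subrr.
rewrite /bary; under eq_bigr do rewrite scalerBl.
by rewrite sumrB -/(bary U a) -/(bary U b) Uab subrr.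
Qed.

Lemma affindep_lift k (V : 'I_k.+2 -> pt) (i : 'I_k.+2) : affindep V ->
  affindep (fun j => V (lift i j)).
Proof.
move=> iV; apply/negPn/negP => /affdepP [a [[j aj] [a0 ab]]].
pose a' l := if unlift i l is Some j then a j else 0.
have a'S j' : a' (lift i j') = a j' by rewrite /a' liftK.
have a'i : a' i = 0 by rewrite /a' unlift_none.
have := affindepP iV (a := a').
rewrite (sum_lift i) a'i add0r; under eq_bigr do rewrite a'S.
move=> /(_ a0); rewrite /bary (sum_lift i) a'i scale0r add0r.
under eq_bigr do rewrite a'S.
by move=> /(_ ab) /(_ (lift i j)); rewrite a'S => /eqP; rewrite (negbTE aj).
Qed.

Lemma affindep_interp k (V : 'I_k.+1 -> pt) (h : 'I_k.+1 -> R) : affindep V ->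
  exists (c : pt) (b : R), forall l, dotv c (V l) = b + h l.
Proof.
move=> iV; have /row_freeP [B MB] := iV.
pose X := B *m \col_i (h (lift ord0 i) - h ord0).
exists X^T, (dotv X^T (V ord0) - h ord0) => l.
case: (unliftP ord0 l) => [i ->|->]; last by rewrite subrK.
have rowi : V (lift ord0 i) - V ord0 = row i (diffmx V) by apply/rowP => j; rewrite !mxE.
have : dotv X^T (V (lift ord0 i) - V ord0) = h (lift ord0 i) - h ord0.
  by rewrite dotv_mx rowi trmxK /X mulmxA -row_mul MB -row_mul mul1mx !mxE.
by rewrite dotvD -scaleN1r dotvZ mulN1r => /eqP; rewrite subr_eq => /eqP ->; ring.
Qed.

Lemma simplex_vertex k (V : 'I_k.+1 -> pt) i : affindep V ->
  vertex (conv (range V)) (V i).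
Proof.
move=> iV; have [c [b Hc]] := affindep_interp (fun l => - (l != i)%:R) iV.
have key be : \sum_l be l = 1 ->
    dotv c (bary V be) = b - \sum_l be l * (l != i)%:R.
  move=> be1; rewrite (dotv_bary_interp Hc be1) -sumrN.
  by congr (_ + _); apply: eq_bigr => l _; rewrite mulrN.
have sge0 be : (forall l, 0 <= be l) -> 0 <= \sum_l be l * (l != i)%:R.
  by move=> be0; apply: sumr_ge0 => l _; apply: mulr_ge0.
exists c, b; split.
  by move=> y /conv_rangeP [be [be0 [be1 ->]]]; rewrite key // lerBlDr lerDl sge0.
apply/seteqP; split.
  move=> y -> /=; split; first by apply: sub_conv; exists i.
  by rewrite Hc eqxx oppr0 addr0.
move=> y [/conv_rangeP [be [be0 [be1 ->]]]] /=.
rewrite key // => /eqP; rewrite subr_eq addrC -subr_eq subrr eq_sym => /eqP H.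
have z := psumr_eq0P (fun l => mulr_ge0 (be0 l) (ler0n _ (l != i))) H.
have bel l : l != i -> be l = 0 by move=> li; move: (z l); rewrite li mulr1.
have bei : be i = 1 by rewrite -be1 (bigD1 i) //= big1 ?addr0 // => l /bel.
rewrite /bary (bigD1 i) //= bei scale1r big1 ?addr0 //.
by move=> l /bel ->; rewrite scale0r.
Qed.

Lemma simplex_vertexP k (V : 'I_k -> pt) v :
  vertex (conv (range V)) v -> exists i, v = V i.
Proof.
move=> [c [b [Hle Heq]]].
have : ([set v] : set pt) v by [].
rewrite Heq => -[/conv_rangeP [be [be0 [be1 vE]]]] /= dv.
have Vle l : dotv c (V l) <= b by apply: Hle; apply: sub_conv; exists l.
suff [i Hi] : exists i, dotv c (V i) = b.
  exists i; have : ([set v] : set pt) (V i).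
    by rewrite Heq; split => //; apply: sub_conv; exists i.
  by move=> ->.
apply/not_existsP => H.
have lt l : dotv c (V l) < b by rewrite lt_def Vle andbT; apply/eqP => E; exact: (H l (esym E)).
move: dv; rewrite vE dotv_bary => /eqP; apply/negP.
rewrite lt_eqF // -[b]mul1r -be1 mulr_suml.
have [l bl] : exists l, be l != 0.
  apply/not_existsP => H'; move: be1; rewrite big1 => [/eqP|l _].
    by rewrite eq_sym oner_eq0.
  by move: (H' l); case: eqP.
rewrite [X in X < _](bigD1 l) // [X in _ < X](bigD1 l) //=.
apply: ltr_leD; first by rewrite ltr_pM2l ?lt // lt_def bl be0.
by apply: ler_sum => m _; apply: ler_wpM2l => //; apply: ltW.
Qed.

Lemma affdim_ge_mono (S T : set pt) k : S `<=` T -> affdim_ge S k -> affdim_ge T k.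
Proof. by move=> ST [p [Sp ip]]; exists p; split=> // i; apply: ST. Qed.

Lemma simplex_not_affdim_ge m (U : 'I_m.+1 -> pt) : ~ affdim_ge (conv (range U)) m.+1.
Proof.
move=> [p [Cp ip]].
have /choice [f Hf] : forall i : 'I_m.+2, exists be : 'I_m.+1 -> R,
   (forall l, 0 <= be l) /\ \sum_l be l = 1 /\ p i = bary U be.
  by move=> i; apply/conv_rangeP.
pose Wm : 'M[R]_(m.+2, m.+1) := \matrix_(i, l) f i l.
have [g [gnz gW]] := @rank_lt_kernel _ _ Wm (rank_leq_col Wm).
have gl l : \sum_i g 0 i * f i l = 0.
  move/rowP: gW => /(_ l); rewrite !mxE => H; rewrite -[RHS]H.
  by apply: eq_bigr => i _; rewrite mxE.
have a0 : \sum_i g 0 i = 0.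
  transitivity (\sum_(l < m.+1) \sum_i g 0 i * f i l); last by rewrite big1.
  rewrite exchange_big /=.
  by apply: eq_bigr => i _; rewrite -mulr_sumr (proj1 (proj2 (Hf i))) mulr1.
have ab : bary p (fun i => g 0 i) = 0.
  rewrite /bary; under eq_bigr do rewrite (proj2 (proj2 (Hf _))) /bary scaler_sumr.
  rewrite exchange_big /= big1 // => l _.
  by under eq_bigr do rewrite scalerA; rewrite -scaler_suml gl scale0r.
have [i gi] := row_neq0P gnz.
by move/eqP: gi; apply; apply: (affindepP ip a0 ab).
Qed.

Lemma affdim_simplex k (V : 'I_k.+1 -> pt) : affindep V -> affdim (conv (range V)) k.
Proof.
move=> iV; split; last exact: simplex_not_affdim_ge.
by exists V; split=> // i; apply: sub_conv; exists i.
Qed.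

Lemma facet_simplex k (V : 'I_k.+2 -> pt) (i : 'I_k.+2) : affindep V ->
  facet (conv (range V)) (conv (range (fun j => V (lift i j)))).
Proof.
move=> iV; split; last first.
  exists k; split; first exact: affdim_simplex.
  by apply: affdim_simplex; apply: affindep_lift.
have [c [b Hc]] := affindep_interp (fun l => - (l == i)%:R) iV.
have key be : \sum_l be l = 1 -> dotv c (bary V be) = b - be i.
  move=> be1; rewrite (dotv_bary_interp Hc be1); congr (_ + _).
  rewrite (bigD1 i) //= eqxx mulrN1 big1 ?addr0 //.
  by move=> l /negbTE ->; rewrite mulrN mulr0 oppr0.
exists c, b; split.
  by move=> y /conv_rangeP [be [be0 [be1 ->]]]; rewrite key // lerBlDr lerDl.
apply/seteqP; split.
  move=> y /conv_rangeP [be [be0 [be1 ->]]]; split.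
    apply: (@conv_mono (range (fun j => V (lift i j)))).
      by move=> _ [j _ <-]; exists (lift i j).
    by apply/conv_rangeP; exists be.
  rewrite /= (dotv_bary_interp (h := fun j => 0) (b := b)) ?be1 //.
    by rewrite big1 ?addr0 // => j _; rewrite mulr0.
  by move=> j; rewrite Hc /= eq_sym (negbTE (neq_lift i j)) oppr0 addr0.
move=> y [/conv_rangeP [be [be0 [be1 ->]]]] /=.
rewrite key // => /eqP; rewrite subr_eq addrC -subr_eq subrr eq_sym => /eqP bi.
exact: conv_range_lift.
Qed.

Lemma face_simplex_coords k (V : 'I_k -> pt) c b y :
  (forall y, conv (range V) y -> dotv c y <= b) ->
  conv (range V) y -> dotv c y = b ->
  exists mu : 'I_k -> R, (forall l, 0 <= mu l) /\ \sum_l mu l = 1 /\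
     y = bary V mu /\ forall l, dotv c (V l) != b -> mu l = 0.
Proof.
move=> Hle /conv_rangeP [mu [mu0 [mu1 ->]]] Hb; exists mu; do 3!split=> //.
have Vle l : dotv c (V l) <= b by apply: Hle; apply: sub_conv; exists l.
have H : \sum_l mu l * (b - dotv c (V l)) = 0.
  under eq_bigr do rewrite mulrBr.
  by rewrite sumrB -mulr_suml mu1 mul1r -dotv_bary Hb subrr.
have z : forall l, mu l * (b - dotv c (V l)) = 0.
  by apply: psumr_eq0P H => l; apply: mulr_ge0 => //; rewrite subr_ge0.
move=> l nb; move/eqP: (z l).
by rewrite mulf_eq0 subr_eq0 [b == _]eq_sym (negbTE nb) orbF => /eqP.
Qed.

Lemma face_simplex_opposite k (V : 'I_k.+1 -> pt) c b i :
  (forall y, conv (range V) y -> dotv c y <= b) -> dotv c (V i) != b ->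
  (forall l, l != i -> dotv c (V l) = b) ->
  conv (range V) `&` [set y | dotv c y = b] = conv (range (fun j => V (lift i j))).
Proof.
move=> Hle Ti Tl; apply/seteqP; split.
  move=> y [Cy dy]; have [mu [mu0 [mu1 [-> Hm]]]] := face_simplex_coords Hle Cy dy.
  by apply: conv_range_lift => //; apply: Hm.
move=> y /conv_rangeP [be [be0 [be1 ->]]]; split.
  apply: (conv_mono (S := range (fun j => V (lift i j)))).
    by move=> _ [j _ <-]; exists (lift i j).
  by apply/conv_rangeP; exists be.
rewrite /= (dotv_bary_interp (h := fun _ => 0) (b := b)) //.
  by rewrite big1 ?addr0 // => l _; rewrite mulr0.
by move=> j; rewrite addr0 Tl // eq_sym neq_lift.
Qed.

Lemma affdim_affine_comb k (V : 'I_k.+1 -> pt) (S : set pt) y : affindep V ->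
  (forall i, S (V i)) -> ~ affdim_ge S k.+1 -> S y -> affine_comb V y.
Proof.
move=> iV SV nS Sy; apply: contrapT => ny; apply: nS.
pose P l := if unlift ord_max l is Some i then V i else y.
have PS i : P (lift ord_max i) = V i by rewrite /P liftK.
have Pm : P ord_max = y by rewrite /P unlift_none.
exists P; split; first by move=> l; rewrite /P; case: unlift.
apply/negPn/negP => /affdepP [al [[i ai] [a0 ab]]].
have [am|am] := eqVneq (al ord_max) 0.
  have a0' : \sum_(i < k.+1) al (lift ord_max i) = 0.
    by move: a0; rewrite (sum_lift (@ord_max k.+1)) am add0r.
  have ab' : bary V (fun i => al (lift ord_max i)) = 0.
    move: ab; rewrite /bary (sum_lift (@ord_max k.+1)) am scale0r add0r.
    by under eq_bigr do rewrite PS.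
  have H := affindepP iV a0' ab'.
  by move: ai; case: (unliftP ord_max i) => [j ->|->]; rewrite ?H ?am eqxx.
apply: ny; exists (fun i => - al (lift ord_max i) / al ord_max); split.
  rewrite -mulr_suml sumrN.
  move: a0; rewrite (sum_lift (@ord_max k.+1)) addrC => /eqP.
  by rewrite addr_eq0 => /eqP ->; rewrite opprK divff.
move: ab; rewrite /bary (sum_lift (@ord_max k.+1)) Pm; under eq_bigr do rewrite PS.
move=> /eqP; rewrite addr_eq0 => /eqP H.
have -> : y = (al ord_max)^-1 *: (al ord_max *: y) by rewrite scalerA mulVf // scale1r.
rewrite H scalerN scaler_sumr -sumrN; apply: eq_bigr => l _.
by rewrite scalerA -scaleNr mulrC mulNr.
Qed.

Lemma affine_comb1 (V : 'I_1 -> pt) y : affine_comb V y -> y = V ord0.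
Proof.
move=> [be [be1 ->]]; move: be1; rewrite /bary !big_ord1 => ->.
by rewrite scale1r.
Qed.

Lemma relint_affine_eq0 (D : set pt) c b0 x0 :
  (forall y, D y -> 0 <= dotv c y + b0) -> relint D x0 -> dotv c x0 + b0 = 0 ->
  forall q, D q -> dotv c q + b0 = 0.
Proof.
move=> Dge [Dx0 [e [e0 He]]] gx0 q Dq.
pose M := \sum_i `|x0 0 i - q 0 i|.
have M0 : 0 <= M by apply: sumr_ge0.
pose t := e / (M + 1).
have t0 : 0 < t by apply: divr_gt0 => //; apply: ltr_wpDl.
(* Push [q] beyond [x0] by a step small enough to stay in [D]. *)
pose y := (1 + t) *: x0 + (- t) *: q.
have Dy : D y.
  apply: He.
    exists 2%N, (fun i : 'I_2 => if i == ord0 then x0 else q),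
                (fun i : 'I_2 => if i == ord0 then 1 + t else - t).
    split; first by move=> i; case: ifP.
    by split; rewrite !big_ord_recl big_ord0 /= addr0 ?addrK.
  move=> i; rewrite !mxE.
  have -> : (1 + t) * x0 0 i + - t * q 0 i - x0 0 i = t * (x0 0 i - q 0 i) by ring.
  rewrite normrM (gtr0_norm t0).
  have di : `|x0 0 i - q 0 i| <= M by rewrite /M (bigD1 i) //= lerDl sumr_ge0.
  apply: le_lt_trans (_ : t * M < e); first by rewrite ler_pM2l.
  by rewrite /t mulrAC ltr_pdivrMr ?ltr_wpDl // ltr_pM2l // ltrDl.
have := Dge _ Dy; rewrite dotvD !dotvZ => H.
have : t * (dotv c q + b0) <= 0.
  have -> : t * (dotv c q + b0) =
    (1 + t) * (dotv c x0 + b0) - ((1 + t) * dotv c x0 + - t * dotv c q + b0) by ring.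
  by rewrite gx0 mulr0 sub0r oppr_le0.
rewrite pmulr_rle0 // => gq'.
by apply/eqP; rewrite eq_le gq' Dge.
Qed.

Lemma affindep_coord_bound k (p : 'I_k.+1 -> pt) : affindep p ->
  exists S : R, 0 <= S /\ forall (a : 'I_k.+1 -> R) e, \sum_i a i = 0 ->
    (forall j, `|bary p a 0 j| < e) -> \sum_(i < k) `|a (lift ord0 i)| <= e * S.
Proof.
move=> ip; have /row_freeP [B MB] := ip.
exists (\sum_(i < k) \sum_(j < n) `|B j i|); split.
  by apply: sumr_ge0 => i _; apply: sumr_ge0.
move=> a e a0 near; rewrite mulr_sumr; apply: ler_sum => i _.
pose dl : 'rV[R]_k := \row_i a (lift ord0 i).
have dE : dl = bary p a *m B.
  have dM : dl *m diffmx p = bary p a.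
    by rewrite mul_diffmx bary_sum0 //; apply: eq_bigr => l _; rewrite mxE.
  by rewrite -dM -mulmxA MB mulmx1.
have -> : a (lift ord0 i) = dl 0 i by rewrite mxE.
rewrite dE mxE mulr_sumr; apply: le_trans (ler_norm_sum _ _ _) _.
apply: ler_sum => j _; rewrite normrM ler_wpM2r //.
exact: ltW.
Qed.

Lemma convex_relint_exists k (p : 'I_k.+1 -> pt) (D : set pt) : convex_set D ->
  (forall i, D (p i)) -> affindep p -> aff D `<=` affine_comb p ->
  exists x0, relint D x0.
Proof.
move=> cD Dp ip affD.
have hD : conv (range p) `<=` D by apply: conv_sub_convex => // _ [i _ <-].
have [S [S0 bound]] := affindep_coord_bound ip.
pose c0 : R := (k.+1%:R)^-1.
have c00 : 0 < c0 by rewrite invr_gt0 ltr0n.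
have c0s : \sum_(i < k.+1) c0 = 1.
  by rewrite sumr_const card_ord -mulr_natr /c0 mulVf // pnatr_eq0.
pose e := c0 / (S + 1).
have e0 : 0 < e by apply: divr_gt0 => //; apply: ltr_wpDl.
pose x0 := bary p (fun _ => c0).
exists x0; split.
  by apply: hD; apply/conv_rangeP; exists (fun _ => c0); split=> // i; apply: ltW.
exists e; split=> // y /affD [be [be1 ->]] near.
pose al l := be l - c0.
have al0 : \sum_l al l = 0 by rewrite sumrB be1 c0s subrr.
have alb : bary p al = bary p be - x0.
  by rewrite /bary -sumrB; apply: eq_bigr => l _; rewrite scalerBl.
have small : \sum_(i < k) `|al (lift ord0 i)| < c0.
  apply: le_lt_trans (bound al e al0 _) _; first by move=> j; rewrite alb !mxE.
  rewrite /e mulrAC ltr_pdivrMr ?ltr_wpDl //.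
  by rewrite ltr_pM2l // ltr_pwDr.
have beE i : be (lift ord0 i) = c0 + al (lift ord0 i) by rewrite /al addrC subrK.
apply: hD; apply/conv_rangeP; exists be; split=> //.
move=> l; apply: ltW; case: (unliftP ord0 l) => [i ->|->].
  rewrite beE -(opprK (al _)) subr_gt0; apply: le_lt_trans (ler_norm _) _.
  by rewrite normrN; apply: le_lt_trans small; rewrite (bigD1 i) //= lerDl sumr_ge0.
have -> : be ord0 = c0 - \sum_(i < k) al (lift ord0 i).
  have : \sum_(i < k.+1) c0 = be ord0 + \sum_(i < k) (c0 + al (lift ord0 i)).
    by rewrite c0s -be1 big_ord_recl; congr (_ + _); apply: eq_bigr => i _.
  by rewrite big_ord_recl big_split /=; lra.
rewrite subr_gt0; apply: le_lt_trans small.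
by apply: le_trans (ler_norm _) _; exact: ler_norm_sum.
Qed.

(* The ratio test of the simplex method: [l] is the first coordinate to vanish
   on the way from [g0] to [g]. *)
Lemma ratio_test_exit k (g0 g : 'I_k -> R) l0 : (forall l, 0 < g0 l) -> g l0 < 0 ->
  exists s l, [/\ 0 <= s, s < 1, forall m, 0 <= (1 - s) * g0 m + s * g m &
                 (1 - s) * g0 l + s * g l = 0].
Proof.
move=> g0pos gl0.
have [ls Pls Hmin] := arg_minP (P := fun l => g l < 0)
  (fun l => g0 l / (g0 l - g l)) gl0.
have dpos l : g l < 0 -> 0 < g0 l - g l.
  by move=> gl; rewrite subr_gt0; apply: lt_trans gl (g0pos l).
set s := g0 ls / (g0 ls - g ls) in Hmin.
have ggE m : (1 - s) * g0 m + s * g m = g0 m - s * (g0 m - g m) by ring.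
have s0 : 0 <= s by apply: divr_ge0; apply: ltW; [apply: g0pos | apply: dpos].
have s1 : s < 1 by rewrite /s ltr_pdivrMr ?dpos // mul1r; move: Pls; rewrite /=; lra.
exists s, ls; split=> // [m|].
  have [gm|gm] := leP 0 (g m).
    by apply: addr_ge0; apply: mulr_ge0; rewrite // ?subr_ge0 ltW ?g0pos.
  by rewrite ggE subr_ge0 -ler_pdivlMr ?dpos // Hmin.
by rewrite ggE /s divfK ?subrr // gt_eqF // dpos.
Qed.

Section RefinementCell.
Variables (Ap : seq pt) (D : set pt).
Hypothesis RC : refinement_cell Ap D.

Lemma refinement_cell_convex : convex_set D.
Proof.
move: RC => [_ [sigma [Hs HD]]] u v s; rewrite !HD => Du Dv s0 s1 w.
have [c [b [_ [_ E]]]] := Hs w.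
by move: (Du w) (Dv w); rewrite E => Cu Cv; apply: convex_conv.
Qed.

Lemma refinement_cell_sub_conv : D `<=` conv (pts Ap).
Proof.
move: RC => [_ [sigma [Hs HD]]] y; rewrite HD => /(_ (fun _ => 0)).
have [c [b [_ [_ ->]]]] := Hs (fun _ => 0).
by apply: conv_mono => z [].
Qed.

(* Lift the vertices of U to height 0 and all other points of Ap to height 1;
   the affine function below is the lower face of that lifting containing D. *)
Lemma refinement_cell_height m (U : 'I_m.+1 -> pt) : (forall i, U i \in Ap) ->
  exists c b0, (forall y, D y -> 0 <= dotv c y + b0) /\
    (forall y, conv (range U) y -> dotv c y + b0 <= 0) /\
    (forall y, D y -> dotv c y + b0 = 0 -> conv (range U) y).
Proof.
move: RC => [_ [sigma [Hs HD]]] UA.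
pose w y : R := if [exists i, y == U i] then 0 else 1.
have w0 y : 0 <= w y by rewrite /w; case: ifP.
have [c [b0 [Hle [_ Hsig]]]] := Hs w.
have DK : D `<=` sigma w by move=> y; rewrite HD => /(_ w).
exists c, b0; split; [|split].
- move=> y /DK; rewrite Hsig => /(conv_decomp c b0) [k [p [a [Sp [a0 [a1 [_ ->]]]]]]].
  apply: sumr_ge0 => i _; apply: mulr_ge0 => //.
  by case: (Sp i) => _ ->.
- move=> y /conv_rangeP [be [be0 [be1 ->]]]; rewrite dotv_baryD //.
  apply: sumr_le0 => i _; apply: mulr_ge0_le0 => //.
  have := Hle _ (UA i); rewrite /w.
  by have -> : [exists j, U i == U j] by apply/existsP; exists i.
move=> q /DK; rewrite Hsig => /(conv_decomp c b0) [k [p [a [Sp [a0 [a1 [qE gE]]]]]]] gq.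
have z : forall i, a i * (dotv c (p i) + b0) = 0.
  apply: psumr_eq0P; last by rewrite -gE.
  by move=> i; apply: mulr_ge0 => //; case: (Sp i) => _ ->.
exists k, (fun i => if a i == 0 then U ord0 else p i), a; split; last first.
  split=> //; split=> //; rewrite qE /bary; apply: eq_bigr => i _.
  by case: eqP => // ->; rewrite !scale0r.
move=> i; case: eqP => ai; first by exists ord0.
move/eqP: (z i); rewrite mulf_eq0 => /orP [/eqP //|].
case: (Sp i) => _ ->; rewrite /w.
by case: ifP => [/existsP [j /eqP ->] _|]; [exists j | rewrite oner_eq0].
Qed.

Lemma refinement_cell_sub_simplex m (U : 'I_m.+1 -> pt) x0 x s :
  (forall i, U i \in Ap) -> relint D x0 -> D x -> 0 <= s -> s < 1 ->
  conv (range U) ((1 - s) *: x0 + s *: x) -> D `<=` conv (range U).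
Proof.
move=> UA rx0 Dx s0 s1 Cz.
have [c [b0 [gD [gU gZ]]]] := refinement_cell_height UA.
have gx0 : dotv c x0 + b0 = 0.
  have := gU _ Cz; rewrite dotvD !dotvZ.
  have := gD _ (relint_sub rx0); have := gD _ Dx.
  move: (dotv c x0) (dotv c x) => u v gv gu H.
  have : (1 - s) * (u + b0) <= 0.
    have -> : (1 - s) * (u + b0) = (1 - s) * u + s * v + b0 - s * (v + b0) by ring.
    by rewrite subr_le0; apply: le_trans H _; apply: mulr_ge0.
  rewrite pmulr_rle0 ?subr_gt0 // => H'.
  by apply/eqP; rewrite eq_le H' gu.
by move=> q Dq; apply: gZ => //; apply: relint_affine_eq0 gD rx0 gx0 q Dq.
Qed.

End RefinementCell.

End ConvexGeometry.

Section Pivot.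
Variables (R : realType) (n : nat).
Notation pt := ('rV[R]_n).
Variables (Ap : seq pt) (D : set pt) (d : nat) (V : 'I_d.+2 -> pt) (x0 : pt)
  (mu : 'I_d.+2 -> R) (pD : 'I_d.+2 -> pt).
Hypotheses (RC : refinement_cell Ap D) (pDin : forall i, D (pD i))
  (pDind : affindep pD) (ApD : forall y, y \in Ap -> affine_comb pD y)
  (DV : D `<=` affine_comb V) (VA : forall l, V l \in Ap) (Vind : affindep V)
  (rx0 : relint D x0) (mu0 : forall l, 0 <= mu l) (mu1 : \sum_l mu l = 1)
  (x0E : x0 = bary V mu).

Lemma lowdim_simplex_avoids_segment (U : 'I_d.+1 -> pt) : (forall i, U i \in Ap) ->
  forall x s, D x -> 0 <= s -> s < 1 -> ~ conv (range U) ((1 - s) *: x0 + s *: x).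
Proof.
move=> UA x s Dx s0 s1 C; have DU := refinement_cell_sub_simplex RC UA rx0 Dx s0 s1 C.
by apply: (@simplex_not_affdim_ge _ _ _ U); apply: affdim_ge_mono DU _; exists pD.
Qed.

Lemma lowdim_simplex_avoids_x0 (U : 'I_d.+1 -> pt) : (forall i, U i \in Ap) ->
  ~ conv (range U) x0.
Proof.
move=> UA C; apply: (lowdim_simplex_avoids_segment UA (relint_sub rx0) (lexx 0) ltr01).
by rewrite subr0 scale1r scale0r addr0.
Qed.

Lemma mu_gt0 l : 0 < mu l.
Proof.
rewrite lt_def mu0 andbT; apply/eqP => ml.
apply: (@lowdim_simplex_avoids_x0 (fun j => V (lift l j))) => [j|]; first exact: VA.
by rewrite x0E; apply: conv_range_lift.
Qed.

Lemma Lambda_x0 S : Lambda Ap d.+1 D S -> S x0.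
Proof. by move=> [U [_ [_ [_ rel]]]]; exact: relint_sub (rel _ rx0). Qed.

Section Apex.
Variables (a : pt) (lam : 'I_d.+2 -> R).
Hypotheses (aA : a \in Ap) (lam1 : \sum_l lam l = 1) (aE : a = bary V lam).

Definition pivot k l := if l == k then a else V l.

(* [pivot_to_V k g] are the coordinates, with respect to [V], of the point with
   coordinates [g] with respect to [pivot k]; [V_to_pivot] inverts it when
   [lam k != 0]. *)
Definition pivot_to_V k (g : 'I_d.+2 -> R) l := (if l == k then 0 else g l) + g k * lam l.

Definition V_to_pivot k (g : 'I_d.+2 -> R) l :=
  if l == k then g k / lam k else g l - g k * lam l / lam k.

Lemma bary_pivot k g : bary (pivot k) g = bary V (pivot_to_V k g).
Proof.
rewrite /bary /pivot_to_V; under [RHS]eq_bigr do rewrite scalerDl.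
rewrite big_split /=.
have -> : \sum_i (g k * lam i) *: V i = g k *: a.
  by rewrite aE /bary scaler_sumr; apply: eq_bigr => i _; rewrite scalerA.
rewrite (bigD1 k) //= [in RHS](bigD1 k) //= /pivot eqxx scale0r add0r addrC.
by congr (_ + _); apply: eq_bigr => i /negbTE ->.
Qed.

Lemma sum_pivot_to_V k g : \sum_l pivot_to_V k g l = \sum_l g l.
Proof.
rewrite /pivot_to_V big_split /= -mulr_sumr lam1 mulr1.
rewrite (bigD1 k) //= eqxx add0r [in RHS](bigD1 k) //= addrC.
by congr (_ + _); apply: eq_bigr => i /negbTE ->.
Qed.

Lemma pivot_to_VK k g : lam k != 0 -> pivot_to_V k (V_to_pivot k g) = g.
Proof.
move=> lk; apply/funext => l; rewrite /pivot_to_V /V_to_pivot eqxx.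
by case: eqP => [->|_]; rewrite ?add0r ?divfK // mulrAC subrK.
Qed.

Lemma pivot_coordsP k y g : lam k != 0 -> \sum_l g l = 1 -> y = bary V g ->
  \sum_l V_to_pivot k g l = 1 /\ y = bary (pivot k) (V_to_pivot k g).
Proof.
move=> lk g1 ->; split; first by rewrite -(sum_pivot_to_V k) pivot_to_VK.
by rewrite bary_pivot pivot_to_VK.
Qed.

Lemma pivot_in_Ap k l : pivot k l \in Ap.
Proof. by rewrite /pivot; case: eqP. Qed.

Lemma pivot_affindep k : 0 < lam k -> affindep (pivot k).
Proof.
move=> lk; apply/negPn/negP => /affdepP [al [[i ai] [a0 ab]]].
have := affindepP Vind (a := pivot_to_V k al).
rewrite sum_pivot_to_V -bary_pivot => /(_ a0 ab) H.
have ak : al k = 0.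
  move: (H k); rewrite /pivot_to_V eqxx add0r => /eqP.
  by rewrite mulf_eq0 [lam k == 0]gt_eqF // orbF => /eqP.
move: ai; have [->|ik] := eqVneq i k; first by rewrite ak eqxx.
by move: (H i); rewrite /pivot_to_V (negbTE ik) ak mul0r addr0 => ->; rewrite eqxx.
Qed.

Lemma conv_facet_apex k : conv (conv (range (fun j => V (lift k j))) `|` [set a]) =
  conv (range (pivot k)).
Proof.
apply/seteqP; split.
  apply: conv_sub_convex; first exact: convex_conv.
  move=> y [|->]; last by apply: sub_conv; exists k => //; rewrite /pivot eqxx.
  apply: conv_mono => _ [j _ <-]; exists (lift k j) => //.
  by rewrite /pivot eq_sym (negbTE (neq_lift k j)).
apply: conv_mono => _ [l _ <-]; rewrite /pivot; case: eqP => [_|/eqP lk]; first by right.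
left; apply: sub_conv; case: (unliftP k l) lk => [j ->|->] //; by rewrite eqxx.
Qed.

Definition ratio_min k := forall l, 0 < lam l -> mu k * lam l <= mu l * lam k.

Lemma ratio_min_exists : exists2 k, 0 < lam k & ratio_min k.
Proof.
have [l0 l00] : exists l, 0 < lam l.
  apply: contrapT => H.
  have : \sum_l lam l <= 0.
    apply: sumr_le0 => l _; rewrite leNgt; apply/negP => Hl; apply: H; by exists l.
  by rewrite lam1 ler10.
have [k Pk Hmin] := arg_minP (P := fun l => 0 < lam l) (fun l => mu l / lam l) l00.
exists k => // l Pl; have := Hmin l Pl.
by rewrite ler_pdivlMr // mulrAC ler_pdivrMr.
Qed.

Lemma x0_pivot_coords_gt0 k : 0 < lam k -> ratio_min k ->
  forall l, 0 < V_to_pivot k mu l.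
Proof.
move=> lk kmin.
have [g1 x0W] := pivot_coordsP (lt0r_neq0 lk) mu1 x0E.
have ge0 m : 0 <= V_to_pivot k mu m.
  rewrite /V_to_pivot; case: eqP => _; first by apply: divr_ge0 => //; apply: ltW.
  rewrite subr_ge0; have [lm|lm] := ltP 0 (lam m).
    by rewrite ler_pdivrMr //; apply: kmin.
  apply: le_trans (mu0 m); apply: mulr_le0_ge0; last by rewrite invr_ge0 ltW.
  exact: mulr_ge0_le0.
move=> l; rewrite lt_def ge0 andbT; apply/eqP => gl.
apply: (@lowdim_simplex_avoids_x0 (fun j => pivot k (lift l j))) => [j|].
  exact: pivot_in_Ap.
by rewrite x0W; apply: conv_range_lift.
Qed.

Lemma ratio_min_sub_pivot k : 0 < lam k -> ratio_min k ->
  D `<=` conv (range (pivot k)).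
Proof.
move=> lk kmin q Dq.
have lk0 : lam k != 0 by rewrite lt0r_neq0.
have [be [be1 qE]] := DV Dq.
have [g1 qW] := pivot_coordsP lk0 be1 qE.
have [g01 x0W] := pivot_coordsP lk0 mu1 x0E.
have [[l0 gl0]|gge0] := pselect (exists l, V_to_pivot k be l < 0); last first.
  apply/conv_rangeP; exists (V_to_pivot k be); split=> // l.
  by rewrite leNgt; apply/negP => gl; apply: gge0; exists l.
have [s [ls [s0 s1 zge zls]]] :=
  ratio_test_exit (x0_pivot_coords_gt0 lk kmin) gl0.
exfalso; apply: (@lowdim_simplex_avoids_segment (fun j => pivot k (lift ls j)) _ q s) => //.
  by move=> j; apply: pivot_in_Ap.
rewrite x0W qW -bary_comb; apply: conv_range_lift => //.
by rewrite big_split /= -!mulr_sumr g01 g1 !mulr1 subrK.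
Qed.

Lemma aff_pivot_sub k : aff (conv (range (pivot k))) `<=` aff D.
Proof.
have : conv (range (pivot k)) `<=` affine_comb pD.
  move=> y /conv_sub_aff; apply: aff_sub_affine_comb => _ [l _ <-].
  by apply: ApD; apply: pivot_in_Ap.
move=> /aff_sub_affine_comb sub y /sub [be [be1 ->]].
by exists d.+2, pD, be.
Qed.

Lemma Lambda_pivot k : 0 < lam k -> ratio_min k ->
  Lambda Ap d.+1 D (conv (conv (range (fun j => V (lift k j))) `|` [set a])).
Proof.
move=> lk kmin; exists (pivot k); split; first exact: pivot_in_Ap.
split; first exact: pivot_affindep.
split; first exact: conv_facet_apex.
have DW := ratio_min_sub_pivot lk kmin.
rewrite conv_facet_apex => x [Dx [e [e0 He]]]; split; first exact: DW.
by exists e; split=> // y /aff_pivot_sub Ay near; apply: DW; apply: He.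
Qed.

Lemma conv_face_apex_coords c b G y :
  (forall y, conv (range V) y -> dotv c y <= b) ->
  G = conv (range V) `&` [set y | dotv c y = b] -> conv (G `|` [set a]) y ->
  exists t (nu : 'I_d.+2 -> R), [/\ 0 <= t, forall l, 0 <= nu l,
    t + \sum_l nu l = 1, forall l, dotv c (V l) != b -> nu l = 0 &
    y = t *: a + bary V nu].
Proof.
move=> Hle HG; move: y; apply: conv_sub_convex => [u v s|z].
  move=> [t [nu [t0 nu0 tn1 nuT ->]]] [t' [nu' [t0' nu0' tn1' nuT' ->]]] s0 s1.
  have s1' : 0 <= 1 - s by rewrite subr_ge0.
  exists ((1 - s) * t + s * t'), (fun l => (1 - s) * nu l + s * nu' l); split.
  - by apply: addr_ge0; apply: mulr_ge0.
  - by move=> l; apply: addr_ge0; apply: mulr_ge0.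
  - rewrite big_split /= -!mulr_sumr.
    have -> : (1 - s) * t + s * t' + ((1 - s) * \sum_i nu i + s * \sum_i nu' i) =
      (1 - s) * (t + \sum_i nu i) + s * (t' + \sum_i nu' i) by ring.
    by rewrite tn1 tn1' !mulr1 subrK.
  - by move=> l Tl; rewrite nuT // nuT' // !mulr0 addr0.
  - by rewrite bary_comb !scalerDr !scalerA [(_ + _) *: a]scalerDl addrACA.
case=> [|->]; last first.
  exists 1, (fun _ => 0); split=> //; first by rewrite big1 ?addr0.
  by rewrite bary0 scale1r addr0.
rewrite HG => -[Cz dz].
have [nu [nu0 [nu1 [zE Hnu]]]] := face_simplex_coords Hle Cz dz.
by exists 0, nu; split=> //; rewrite ?add0r // scale0r add0r.
Qed.

Lemma x0_apex_coords_gt0 i t (nu : 'I_d.+2 -> R) : 0 <= t -> (forall l, 0 <= nu l) ->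
  nu i = 0 -> (forall l, mu l = t * lam l + nu l) -> forall l, l != i -> 0 < nu l.
Proof.
move=> t0 nu0 nui muE l li; rewrite lt_def nu0 andbT; apply/eqP => nul.
pose z m := if m == i then t else nu m.
have Tz : pivot_to_V i z = mu.
  apply/funext => m; rewrite /pivot_to_V /z eqxx muE.
  by case: eqP => [->|_]; rewrite ?nui ?add0r ?addr0 // addrC.
apply: (@lowdim_simplex_avoids_x0 (fun j => pivot i (lift l j))) => [j|].
  exact: pivot_in_Ap.
have -> : x0 = bary (pivot i) z by rewrite bary_pivot Tz.
apply: conv_range_lift; first by move=> m; rewrite /z; case: eqP.
  by rewrite -(sum_pivot_to_V i) Tz.
by rewrite /z (negbTE li).
Qed.

Lemma facet_apex_x0 G : facet (conv (range V)) G -> conv (G `|` [set a]) x0 ->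
  exists i, [/\ G = conv (range (fun j => V (lift i j))), 0 < lam i &
   forall l, l != i -> 0 < lam l -> mu i * lam l < mu l * lam i].
Proof.
move=> [[c [b [Hle HG]]] [k' [dP dG]]] Cx0.
have [t [nu [t0 nu0 tn1 nuT x0C]]] := conv_face_apex_coords Hle HG Cx0.
have muE l : mu l = t * lam l + nu l.
  apply/esym; move: l.
  apply: (affindep_bary_inj Vind (a := fun l => t * lam l + nu l) (b := mu)).
    by rewrite big_split /= -mulr_sumr lam1 mulr1 tn1 mu1.
  rewrite -x0E x0C /bary; under eq_bigr do rewrite scalerDl.
  rewrite big_split /= aE /bary scaler_sumr; congr (_ + _).
  by apply: eq_bigr => l _; rewrite scalerA.
have [i Ti] : exists i, dotv c (V i) != b.
  apply: contrapT => H.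
  have allT l : dotv c (V l) = b.
    by apply/eqP; apply: contrapT => /negP Hl; apply: H; exists l.
  apply: (proj2 dG); apply: affdim_ge_mono (proj1 dP) => y Cy.
  rewrite HG; split=> //=; move: Cy => /conv_rangeP [be [be0 [be1 ->]]].
  rewrite (dotv_bary_interp (h := fun _ => 0) (b := b)) //.
    by rewrite big1 ?addr0 // => l _; rewrite mulr0.
  by move=> l; rewrite allT addr0.
have nui : nu i = 0 := nuT i Ti.
have mui : mu i = t * lam i by rewrite muE nui addr0.
have tpos : 0 < t.
  rewrite lt_def t0 andbT; apply/eqP => t00.
  by have := mu_gt0 i; rewrite mui t00 mul0r ltxx.
have lip : 0 < lam i by rewrite -(pmulr_rgt0 _ tpos) -mui mu_gt0.
have nupos := x0_apex_coords_gt0 t0 nu0 nui muE.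
have Tl l : l != i -> dotv c (V l) = b.
  move=> li; apply/eqP; apply: contrapT => /negP /nuT nl.
  by have := nupos l li; rewrite nl ltxx.
exists i; split=> //; last first.
  move=> l li ll; rewrite mui muE -subr_gt0.
  have -> : (t * lam l + nu l) * lam i - t * lam i * lam l = nu l * lam i by ring.
  by apply: mulr_gt0 => //; apply: nupos.
by rewrite HG; apply: face_simplex_opposite.
Qed.

Lemma apex_pivot G : facet (conv (range V)) G ->
  Lambda Ap d.+1 D (conv (G `|` [set a])) ->
  exists2 i, 0 < lam i & conv (G `|` [set a]) = conv (range (pivot i)).
Proof.
move=> fG LG; have [i [-> lip _]] := facet_apex_x0 fG (Lambda_x0 LG).
by exists i; rewrite ?conv_facet_apex.
Qed.

Lemma unique_facet_apex :
  exists! G, facet (conv (range V)) G /\ Lambda Ap d.+1 D (conv (G `|` [set a])).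
Proof.
have [k lk kmin] := ratio_min_exists.
exists (conv (range (fun j => V (lift k j)))).
split; first by split; [apply: facet_simplex | apply: Lambda_pivot].
move=> G' [fG' LG'].
have [i [-> lii Hi]] := facet_apex_x0 fG' (Lambda_x0 LG').
have [|k' [Ek lik' Hk']] := facet_apex_x0 (facet_simplex k Vind).
  exact: Lambda_x0 (Lambda_pivot lk kmin).
rewrite Ek; have [-> //|ne] := eqVneq k' i.
have ne' : i != k' by rewrite eq_sym.
by have := lt_trans (Hk' i ne' lii) (Hi k' ne lik'); rewrite ltxx.
Qed.

End Apex.

Hypothesis ApV : forall a, a \in Ap -> affine_comb V a.

Lemma Lambda_apex_vertex a G : a \in Ap -> facet (conv (range V)) G ->
  Lambda Ap d.+1 D (conv (G `|` [set a])) ->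
  vertex (conv (G `|` [set a])) a /\
  forall b, ~ vertex (conv (range V)) b -> vertex (conv (G `|` [set a])) b -> b = a.
Proof.
move=> aA fG LG; have [lam [lam1 aE]] := ApV aA.
have [i lip ->] := apex_pivot aA lam1 aE fG LG.
split; first by have := simplex_vertex i (pivot_affindep lam1 aE lip); rewrite /pivot eqxx.
move=> b nvb /simplex_vertexP [l bE]; move: nvb; rewrite bE /pivot.
case: eqP => // _ [].
exact: simplex_vertex.
Qed.

Lemma pivot_map r (Delta : 'I_r -> set pt) (j : 'I_r) :
  (forall S, Lambda Ap d.+1 D S <-> exists i, S = Delta i) ->
  Delta j = conv (range V) ->
  (forall a, a \in Ap -> ~ vertex (Delta j) a ->
     exists! G, facet (Delta j) G /\ Lambda Ap d.+1 D (conv (G `|` [set a])))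
  /\
  (exists phi : pt -> 'I_r,
     (forall a, a \in Ap -> ~ vertex (Delta j) a ->
        phi a != j /\
        exists G, facet (Delta j) G /\ Delta (phi a) = conv (G `|` [set a]))
     /\
     (forall a b, a \in Ap -> ~ vertex (Delta j) a ->
                  b \in Ap -> ~ vertex (Delta j) b ->
                  phi a = phi b -> a = b)).
Proof.
move=> HL Dj; rewrite Dj.
have unique_facet a : a \in Ap -> exists! G, facet (conv (range V)) G /\
    Lambda Ap d.+1 D (conv (G `|` [set a])).
  by move=> aA; have [lam [lam1 aE]] := ApV aA; apply: unique_facet_apex aE.
split; first by move=> a aA _; apply: unique_facet.
have /choice [phi Hphi] : forall a, exists i, a \in Ap ->
    exists G, facet (conv (range V)) G /\ Delta i = conv (G `|` [set a]).
  move=> a; have [aA|naA] := pselect (a \in Ap); last by exists j.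
  have [G [[fG LG] _]] := unique_facet a aA.
  by have [i Ei] := (proj1 (HL _)) LG; exists i => _; exists G.
have apex a : a \in Ap -> vertex (Delta (phi a)) a /\
    forall b, ~ vertex (conv (range V)) b -> vertex (Delta (phi a)) b -> b = a.
  move=> aA; have [G [fG EG]] := Hphi a aA; rewrite EG.
  by apply: Lambda_apex_vertex => //; apply/HL; exists (phi a).
exists phi; split=> [a aA nva|a b aA nva bA nvb pab].
  split; last exact: Hphi.
  by apply/eqP => pj; apply: nva; rewrite -Dj -pj; apply: (apex a aA).1.
by apply/esym/(apex a aA).2 => //; rewrite pab; apply: (apex b bA).1.
Qed.

End Pivot.

Theorem lemma3p4 (R : realType) (n : nat) (Ap Am : seq 'rV[R]_n) (d : nat)
    (D : set 'rV[R]_n) (r : nat) (Delta : 'I_r -> set 'rV[R]_n) (j : 'I_r) :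
  (forall x, x \in Ap -> x \notin Am) ->
  nonseparable Ap Am ->
  affdim (conv (pts (Ap ++ Am))) d ->
  cellFd Ap d D -> pts Am `<=` D ->
  injective Delta ->
  (forall S, Lambda Ap d D S <-> exists i, S = Delta i) ->
  (forall a, a \in Ap -> ~ vertex (Delta j) a ->
     exists! G, facet (Delta j) G /\ Lambda Ap d D (conv (G `|` [set a])))
  /\
  (exists phi : 'rV[R]_n -> 'I_r,
     (forall a, a \in Ap -> ~ vertex (Delta j) a ->
        phi a != j /\
        exists G, facet (Delta j) G /\ Delta (phi a) = conv (G `|` [set a]))
     /\
     (forall a b, a \in Ap -> ~ vertex (Delta j) a ->
                  b \in Ap -> ~ vertex (Delta j) b ->
                  phi a = phi b -> a = b)).
Proof.
(* Only the cell structure of [D] matters: [Am] enters solely through [d]. *)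
move=> _ _ [_ Snot] [RC [Dge _]] _ _ HL.
have [V [VA [Vind [DjE relDj]]]] : Lambda Ap d D (Delta j) by apply/HL; exists j.
set S := conv (pts (Ap ++ Am)) in Snot.
have ApS y : y \in Ap -> S y by move=> yA; apply: sub_conv; rewrite /pts /= mem_cat yA.
have DS : D `<=` S.
  by move=> y /(refinement_cell_sub_conv RC); apply: conv_mono => z; rewrite /pts /= mem_cat => ->.
have SV := affdim_affine_comb Vind (fun i => ApS _ (VA i)) Snot.
case: d V VA Vind DjE relDj Snot Dge HL SV => [|d] V VA Vind DjE relDj Snot [pD [pDin pDind]] HL SV.
  have vx a : a \in Ap -> vertex (Delta j) a.
    by move=> /ApS /SV /affine_comb1 ->; rewrite DjE; apply: simplex_vertex.
  split=> [a /vx //|]; exists (fun _ => j).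
  by split=> [a /vx|a b /vx] //.
have SpD := affdim_affine_comb pDind (fun i => DS _ (pDin i)) Snot.
have [x0 rx0] := convex_relint_exists (refinement_cell_convex RC) pDin pDind
  (aff_sub_affine_comb (fun y Dy => SpD _ (DS _ Dy))).
have /conv_rangeP [mu [mu0 [mu1 x0E]]] : conv (range V) x0.
  by rewrite -DjE; exact: relint_sub (relDj _ rx0).
exact: (pivot_map RC pDin pDind (fun y => SpD y \o ApS y) (fun y => SV y \o DS y)
  VA Vind rx0 mu0 mu1 x0E (fun y => SV y \o ApS y) HL DjE).
Qed.
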